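(* For every finite graph $\mathbb{G}$, the height 1 condition $\Sigma_{\mathbb{G}}$ is trivial if and only if $\mathbb{G}$ is 3-colorable (i.e., admits a homomorphism to $\mathbb{K}_3$).
   Context: A graph is a structure $(V,E)$ with a single symmetric binary relation $E$ (loops allowed); $\mathbb{K}_3$ is the complete loopless graph on three vertices. A clone on a set $A$ is a set of finitary operations on $A$ containing all projections and closed under composition; $\mathcal{P}$ is the clone of projections on $\{0,1\}$. A height 1 condition is a finite set of identities $f(x_{\pi(1)},\dots,x_{\pi(n)})\approx g(x_{\rho(1)},\dots,x_{\rho(m)})$ (function symbols $f,g$, arbitrary maps $\pi,\rho$, universally quantified); a clone satisfies it if its symbols can be assigned functions of the clone of the right arities making all identities true; the condition is trivial if it is satisfied in every clone (equivalently, in $\mathcal{P}$). For a finite graph $\mathbb{G}=(V,E)$, $\Sigma_{\mathbb{G}}$ is the height 1 condition with a ternary symbol $f_v$ for each $v\in V$, a $6$-ary symbol $g_{(u,v)}$ for each $(u,v)\in E$, and, for each $(u,v)\in E$, the identities $f_u(x,y,z)\approx g_{(u,v)}(x,y,x,z,y,z)$ and $f_v(x,y,z)\approx g_{(u,v)}(y,x,z,x,z,y)$. *)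

From mathcomp Require Import all_boot.
Set Implicit Arguments. Unset Strict Implicit. Unset Printing Implicit Defensive.

Definition op (A : Type) (n : nat) := ('I_n -> A) -> A.

Definition is_clone (A : Type) (C : forall n, op A n -> Prop) : Prop :=
  (forall n (i : 'I_n), C n (fun x => x i)) /\
  (forall n m (f : op A n) (gs : 'I_n -> op A m),
      C n f -> (forall i, C m (gs i)) ->
      C m (fun x => f (fun i => gs i x))).

(** An identity  f(x_{pi(1)},...,x_{pi(n)}) ~ g(x_{rho(1)},...,x_{rho(m)})
    over variables x_0, ..., x_{nv-1}. *)
Record h1id (S : Type) (ar : S -> nat) := H1Id {
  h1lhs : S; h1rhs : S; h1nv : nat;
  h1pi : 'I_(ar h1lhs) -> 'I_h1nv;
  h1rho : 'I_(ar h1rhs) -> 'I_h1nv }.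

Record h1cond := H1Cond {
  h1sym : Type;
  h1ar : h1sym -> nat;
  h1idx : finType;
  h1ids : h1idx -> h1id h1ar }.

Definition satisfies (A : Type) (C : forall n, op A n -> Prop) (S : h1cond) : Prop :=
  exists F : forall s : h1sym S, op A (h1ar s),
    (forall s, C (h1ar s) (F s)) /\
    (forall k : h1idx S, forall x : 'I_(h1nv (h1ids k)) -> A,
        F (h1lhs (h1ids k)) (fun i => x (h1pi i)) =
        F (h1rhs (h1ids k)) (fun j => x (h1rho j))).

Definition trivial_h1 (S : h1cond) : Prop :=
  forall (A : Type) (C : forall n, op A n -> Prop), is_clone C -> satisfies C S.

(** A finite graph is a finType V with a symmetric relation E (loops allowed). *)
Section SigmaG.
Variables (V : finType) (E : rel V).

Definition edge := {p : V * V | E p.1 p.2}.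

(** symbols: f_v (ternary) for v in V, g_(u,v) (6-ary) for (u,v) in E *)
Definition sigma_sym := (V + edge)%type.
Definition sigma_ar (s : sigma_sym) : nat :=
  match s with inl _ => 3 | inr _ => 6 end.

(** variables x,y,z are x_0,x_1,x_2 *)
Definition rho1 : 'I_6 -> 'I_3 := fun i => inord (nth 0 [:: 0; 1; 0; 2; 1; 2] i).
Definition rho2 : 'I_6 -> 'I_3 := fun i => inord (nth 0 [:: 1; 0; 2; 0; 2; 1] i).

Definition sigma_id (k : edge * bool) : h1id sigma_ar :=
  let e := k.1 in
  if k.2 then
    (* f_u(x,y,z) ~ g_(u,v)(x,y,x,z,y,z) *)
    @H1Id _ sigma_ar (inl (sval e).1) (inr e) 3 (fun i : 'I_3 => i) rho1
  else
    (* f_v(x,y,z) ~ g_(u,v)(y,x,z,x,z,y) *)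
    @H1Id _ sigma_ar (inl (sval e).2) (inr e) 3 (fun i : 'I_3 => i) rho2.

Definition SigmaG : h1cond :=
  @H1Cond sigma_sym sigma_ar (edge * bool)%type sigma_id.

End SigmaG.

Definition K3 : rel 'I_3 := fun a b => a != b.

Definition graph_hom (V W : Type) (E : rel V) (F : rel W) (h : V -> W) : Prop :=
  forall u v, E u v -> F (h u) (h v).

Definition three_colorable (V : finType) (E : rel V) : Prop :=
  exists h : V -> 'I_3, graph_hom E K3 h.

(* The proof rests on two combinatorial facts about the 6-ary patterns
   rho1 = (x,y,x,z,y,z) and rho2 = (y,x,z,x,z,y) of Sigma_G, read as maps
   'I_6 -> 'I_3: they differ in every coordinate, and every ordered pair
   (a, b) of distinct variables is (rho1 j, rho2 j) for some coordinate j.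

   - If Sigma_G is trivial, it holds in the clone of projections on 'I_3.
     There f_v is a projection onto some c(v) and g_(u,v) a projection onto
     some j; the two identities force c(u) = rho1 j and c(v) = rho2 j, which
     differ, so c is a homomorphism to K_3.
   - Conversely, a 3-colouring c yields a solution in any clone containing
     the projections: interpret f_v as the projection onto c(v) and
     g_(u,v) as the projection onto a coordinate j with
     (rho1 j, rho2 j) = (c(u), c(v)). *)

From mathcomp Require Import all_boot.

Lemma rho_neq (j : 'I_6) : rho1 j != rho2 j.
Proof.
case: j => [[|[|[|[|[|[|?]]]]]] ?] //;
  by rewrite /rho1 /rho2 /= -val_eqE /= !inordK.
Qed.

Lemma rho_onto (a b : 'I_3) :
  a != b -> exists j : 'I_6, rho1 j = a /\ rho2 j = b.
Proof.
case: a b => [[|[|[|?]]] Ha] //; case=> [[|[|[|?]]] Hb] //= _;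
  [ exists (@Ordinal 6 0 isT) | exists (@Ordinal 6 2 isT)
  | exists (@Ordinal 6 1 isT) | exists (@Ordinal 6 4 isT)
  | exists (@Ordinal 6 3 isT) | exists (@Ordinal 6 5 isT) ];
  by split; apply: val_inj; rewrite /rho1 /rho2 /= inordK.
Qed.

Definition pattern_coord (a b : 'I_3) : 'I_6 :=
  odflt ord0 [pick j | (rho1 j == a) && (rho2 j == b)].

Lemma pattern_coordP (a b : 'I_3) :
  a != b -> rho1 (pattern_coord a b) = a /\ rho2 (pattern_coord a b) = b.
Proof.
move=> neq_ab; rewrite /pattern_coord; case: pickP => [j /andP[/eqP-> /eqP->]|none] //.
have [j [rho1_j rho2_j]] := rho_onto _ _ neq_ab.
by move: (none j); rewrite rho1_j rho2_j !eqxx.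
Qed.

Definition proj_op (A : Type) (n : nat) (f : op A n) : Prop :=
  exists i : 'I_n, f = fun x => x i.

Lemma proj_op_clone (A : Type) : is_clone (@proj_op A).
Proof.
split=> [n i|n m f gs [i ->] proj_gs]; first by exists i.
by have [j ->] := proj_gs i; exists j.
Qed.

Section SigmaGSolutions.
Variables (V : finType) (E : rel V).

(* A solution of Sigma_G by projections on 'I_3 encodes a 3-colouring:
   colour v by the coordinate onto which f_v projects. *)
Lemma colorable_of_proj_solution :
  satisfies (@proj_op 'I_3) (SigmaG E) -> three_colorable E.
Proof.
case=> F [proj_F ids_F].
exists (fun v => F (inl v) (fun i : 'I_3 => i)) => u v Euv.
pose e : edge E := exist _ (u, v) Euv.
have /= id_u := ids_F (e, true) (fun i => i).
have /= id_v := ids_F (e, false) (fun i => i).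
have [j proj_g] := proj_F (inr e).
by rewrite id_u id_v proj_g /K3 rho_neq.
Qed.

Lemma proj_solution_of_colorable (A : Type) (C : forall n, op A n -> Prop) :
  (forall n (i : 'I_n), C n (fun x => x i)) ->
  three_colorable E -> satisfies C (SigmaG E).
Proof.
move=> proj_C [c hom_c].
exists (fun s => match s return op A (sigma_ar s) with
                 | inl v => fun x => x (c v)
                 | inr e => fun x => x (pattern_coord (c (sval e).1) (c (sval e).2))
                 end).
split; first by case=> [v|e]; apply: proj_C.
case=> [[[u v] Euv] []] x /=;
  have [rho1_coord rho2_coord] := pattern_coordP _ _ (hom_c _ _ Euv);
  by rewrite ?rho1_coord ?rho2_coord.
Qed.

End SigmaGSolutions.

(* Trivial conditions hold in the projection clone on 'I_3, and every clone
   contains the projections. *)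
Theorem lemma3p3 (V : finType) (E : rel V) (Esym : symmetric E) :
  trivial_h1 (SigmaG E) <-> three_colorable E.
Proof.
split=> [trivial_E | colorable_E A C [proj_C _]].
- exact: colorable_of_proj_solution (trivial_E _ _ (proj_op_clone 'I_3)).
- exact: proj_solution_of_colorable.
Qed.
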